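(* Suppose the total preorder $\succeq$ on $\mathcal{Q}_b$ is monotonic, continuous in the $\mathcal{L}_1$-topology, and satisfies the dual independence axiom. Then there exists a bounded, nondecreasing, continuous function $w:[0,1]\to\mathbb{R}$ such that $$U(\Phi)=\int_0^1\Phi(p)\,dw(p)$$ (a Stieltjes integral) is a numerical representation of $\succeq$ on $\mathcal{Q}_b$.
   Context: $\mathcal{Q}_b$ is the set of bounded, nondecreasing, left-continuous functions on $(0,1]$. The $\mathcal{L}_1$-topology on $\mathcal{Q}_b$ is given by the distance $\mathrm{dist}(\Phi,\Psi)=\int_0^1|\Phi(p)-\Psi(p)|\,dp$. A total preorder is reflexive, transitive, complete; $\succ$ its strict part; continuity means that for each $\Phi$ the sets $\{\Psi:\Psi\succeq\Phi\}$ and $\{\Psi:\Phi\succeq\Psi\}$ are closed. Monotonic: $\Phi\ge\Psi$ pointwise implies $\Phi\succeq\Psi$. Dual independence axiom: $\Phi\succ\Psi$ implies $\alpha\Phi+(1-\alpha)\Upsilon\succ\alpha\Psi+(1-\alpha)\Upsilon$ for all $\Upsilon\in\mathcal{Q}_b$, $\alpha\in(0,1)$. Numerical representation: $\Phi\succ\Psi\iff U(\Phi)>U(\Psi)$. *)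

From Stdlib Require Import Reals Lra ClassicalEpsilon.
Open Scope R_scope.

Definition I01 : Type := { p : R | 0 < p <= 1 }.

Definition bounded01 (f : I01 -> R) : Prop :=
  exists M : R, forall p : I01, Rabs (f p) <= M.

Definition nondecr01 (f : I01 -> R) : Prop :=
  forall p q : I01, proj1_sig p <= proj1_sig q -> f p <= f q.

Definition leftcont01 (f : I01 -> R) : Prop :=
  forall p : I01, forall eps : R, eps > 0 ->
    exists delta : R, delta > 0 /\
      forall q : I01, proj1_sig p - delta < proj1_sig q <= proj1_sig p ->
        Rabs (f q - f p) < eps.

Definition isQb (f : I01 -> R) : Prop :=
  bounded01 f /\ nondecr01 f /\ leftcont01 f.

Definition Qb : Type := { f : I01 -> R | isQb f }.

Definition Qfun (F : Qb) : I01 -> R := proj1_sig F.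

(* Extension of a function on (0,1] to R by 0 outside (0,1]
   (only the value at 0 matters for integrals over [0,1], and it is irrelevant). *)
Definition ext (f : I01 -> R) (x : R) : R :=
  match Rlt_le_dec 0 x with
  | left h0 =>
      match Rle_lt_dec x 1 with
      | left h1 => f (exist _ x (conj h0 h1))
      | right _ => 0
      end
  | right _ => 0
  end.

Fixpoint rsum (h : nat -> R) (n : nat) : R :=
  match n with
  | O => 0
  | S k => rsum h k + h k
  end.

Definition RS_integral (f g : R -> R) (a b I : R) : Prop :=
  forall eps : R, eps > 0 ->
    exists delta : R, delta > 0 /\
      forall (n : nat) (x t : nat -> R),
        x O = a -> x n = b ->
        (forall i : nat, (i < n)%nat ->
            x i < x (S i) /\ x (S i) - x i < delta /\ x i <= t i <= x (S i)) ->
        Rabs (rsum (fun i => f (t i) * (g (x (S i)) - g (x i))) n - I) < eps.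

Definition dist (F G : Qb) : R :=
  epsilon (inhabits 0)
    (fun I => RS_integral (fun x => Rabs (ext (Qfun F) x - ext (Qfun G) x))
                          (fun x => x) 0 1 I).

Definition L1closed (S : Qb -> Prop) : Prop :=
  forall F : Qb, ~ S F ->
    exists eps : R, eps > 0 /\ forall G : Qb, dist F G < eps -> ~ S G.

Definition strict (ge : Qb -> Qb -> Prop) (F G : Qb) : Prop :=
  ge F G /\ ~ ge G F.

Definition bounded_on01 (w : R -> R) : Prop :=
  exists M : R, forall x : R, 0 <= x <= 1 -> Rabs (w x) <= M.

Definition nondecr_on01 (w : R -> R) : Prop :=
  forall x y : R, 0 <= x -> x <= y -> y <= 1 -> w x <= w y.

Definition continuous_on01 (w : R -> R) : Prop :=
  forall x : R, 0 <= x <= 1 -> forall eps : R, eps > 0 ->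
    exists delta : R, delta > 0 /\
      forall y : R, 0 <= y <= 1 -> Rabs (y - x) < delta -> Rabs (w y - w x) < eps.

From Pilot Require Import Defs.
From Stdlib Require Import Reals Lra Lia ClassicalEpsilon Classical ProofIrrelevance.
Open Scope R_scope.

(* Constants are strictly ranked as soon as two of them are (dual independence
   rescales any strict gap), so by monotonicity, continuity and completeness of R
   every F in Q_b has a certainty equivalent V F: the constant c with F ~ c.
   V represents the preference, is monotone and L1-continuous, and dual
   independence makes it additive and positively homogeneous on nonnegative
   combinations.  Writing 1_(q,1] for the indicator of (q,1], the weighting
   function is w q = 1 - V (1_(q,1]); it is nondecreasing, runs from w 0 = 0 to
   w 1 = 1, and is continuous because q |-> 1_(q,1] is L1-continuous.
   Every step function l_0 + sum (l_(i+1) - l_i) 1_(x_(i+1),1] then has value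
   sum l_i (w x_(i+1) - w x_i) (summation by parts); sandwiching F between two
   such step functions on a fine partition shows that V F is the
   Riemann-Stieltjes integral of F against w.  If no two constants are strictly
   ranked, every F is indifferent to every G and w = 0, U = 0 do the job. *)

Lemma rsum_ext (f g : nat -> R) (n : nat) :
  (forall i, (i < n)%nat -> f i = g i) -> rsum f n = rsum g n.
Proof.
  induction n as [|n IH]; simpl; intros H; [reflexivity|].
  rewrite IH by (intros; apply H; lia). rewrite H by lia. reflexivity.
Qed.

Lemma rsum_le (f g : nat -> R) (n : nat) :
  (forall i, (i < n)%nat -> f i <= g i) -> rsum f n <= rsum g n.
Proof.
  induction n as [|n IH]; simpl; intros H; [lra|].
  assert (rsum f n <= rsum g n) by (apply IH; intros; apply H; lia).
  assert (f n <= g n) by (apply H; lia). lra.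
Qed.

Lemma rsum_minus (f g : nat -> R) (n : nat) :
  rsum (fun i => f i - g i) n = rsum f n - rsum g n.
Proof. induction n as [|n IH]; simpl; [lra|]. rewrite IH; lra. Qed.

Lemma rsum_scal (c : R) (f : nat -> R) (n : nat) :
  rsum (fun i => c * f i) n = c * rsum f n.
Proof. induction n as [|n IH]; simpl; [lra|]. rewrite IH; lra. Qed.

Lemma rsum_tele (h : nat -> R) (n : nat) : rsum (fun i => h (S i) - h i) n = h n - h O.
Proof. induction n as [|n IH]; simpl; [lra|]. rewrite IH; lra. Qed.

Lemma rsum_first (h : nat -> R) (n : nat) :
  rsum h (S n) = h O + rsum (fun i => h (S i)) n.
Proof.
  induction n as [|n IH]; [simpl; lra|].
  change (rsum h (S n) + h (S n) = h O + (rsum (fun i => h (S i)) n + h (S n))).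
  rewrite IH; lra.
Qed.

Lemma rsum_tele_approx (f c e : nat -> R) (n : nat) :
  (forall i, (i < n)%nat -> Rabs (f i - (c (S i) - c i)) <= e (S i) - e i) ->
  Rabs (rsum f n - (c n - c O)) <= e n - e O.
Proof.
  intros H. rewrite <- (rsum_tele c), <- rsum_minus, <- (rsum_tele e).
  induction n as [|n IH]; simpl; [rewrite Rabs_R0; lra|].
  assert (A := IH (fun i Hi => H i ltac:(lia))). assert (B := H n ltac:(lia)).
  eapply Rle_trans; [apply Rabs_triang|]. lra.
Qed.

Lemma rsum_increments_le (a d : nat -> R) (e : R) (n : nat) :
  (forall i, (i < n)%nat -> a i <= a (S i)) -> (forall i, (i < n)%nat -> 0 <= d i <= e) ->
  rsum (fun i => (a (S i) - a i) * d i) n <= e * (a n - a O).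
Proof.
  intros Ha Hd. rewrite <- (rsum_tele a), <- rsum_scal. apply rsum_le.
  intros i Hi. specialize (Ha i Hi); specialize (Hd i Hi). nra.
Qed.

Definition cst (c : R) : I01 -> R := fun _ => c.

Lemma cst_ok (c : R) : isQb (cst c).
Proof.
  split; [|split].
  - exists (Rabs c); intros; unfold cst; lra.
  - intros p q _; unfold cst; lra.
  - intros p eps He; exists 1; split; [lra|]; intros; unfold cst.
    rewrite Rminus_diag, Rabs_R0; lra.
Qed.

Definition Qconst (c : R) : Qb := exist _ (cst c) (cst_ok c).

Definition indf (a : R) : I01 -> R := fun p => if Rlt_dec a (proj1_sig p) then 1 else 0.

Lemma ind_ok (a : R) : isQb (indf a).
Proof.
  split; [|split].
  - exists 1; intros p; unfold indf; destruct Rlt_dec; rewrite ?Rabs_R1, ?Rabs_R0; lra.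
  - intros p q H; unfold indf; do 2 destruct Rlt_dec; lra.
  - intros p eps He. unfold indf. destruct (Rlt_dec a (proj1_sig p)) as [h|h].
    + exists (proj1_sig p - a); split; [lra|]. intros q Hq. destruct Rlt_dec; [|lra].
      rewrite Rminus_diag, Rabs_R0; lra.
    + exists 1; split; [lra|]. intros q Hq. destruct Rlt_dec; [lra|].
      rewrite Rminus_diag, Rabs_R0; lra.
Qed.

Definition Ind (a : R) : Qb := exist _ (indf a) (ind_ok a).

(* Nonnegative combination max(a,0) F + max(b,0) G; the truncation of the
   coefficients keeps the combination inside Q_b for all real a, b. *)
Definition linf (a : R) (F : I01 -> R) (b : R) (G : I01 -> R) : I01 -> R :=
  fun p => Rmax 0 a * F p + Rmax 0 b * G p.

Lemma scaled_leftcont (A : R) (F : I01 -> R) (p : I01) (eps : R) :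
  0 <= A -> leftcont01 F -> eps > 0 ->
  exists delta, delta > 0 /\ forall q : I01, proj1_sig p - delta < proj1_sig q <= proj1_sig p ->
    A * Rabs (F q - F p) < eps.
Proof.
  intros HA HF Heps.
  destruct (HF p (eps / (A + 1))) as [d [dp Hd]]; [apply Rdiv_lt_0_compat; lra|].
  exists d; split; [exact dp|]. intros q Hq. specialize (Hd q Hq).
  assert (E : eps / (A + 1) * (A + 1) = eps) by (field; lra).
  assert (0 <= Rabs (F q - F p)) by apply Rabs_pos. nra.
Qed.

Lemma lin_ok (a : R) (F : I01 -> R) (b : R) (G : I01 -> R) :
  isQb F -> isQb G -> isQb (linf a F b G).
Proof.
  intros [[MF HMF] [mF cF]] [[MG HMG] [mG cG]]. unfold linf.
  set (A := Rmax 0 a). set (B := Rmax 0 b).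
  assert (A0 : 0 <= A) by apply Rmax_l. assert (B0 : 0 <= B) by apply Rmax_l.
  split; [|split].
  - exists (A * MF + B * MG). intros p.
    eapply Rle_trans; [apply Rabs_triang|].
    rewrite !Rabs_mult, (Rabs_pos_eq A), (Rabs_pos_eq B) by assumption.
    apply Rplus_le_compat; apply Rmult_le_compat_l; auto.
  - intros p q H. apply Rplus_le_compat; apply Rmult_le_compat_l; auto.
  - intros p eps He.
    destruct (scaled_leftcont A F p (eps / 2) A0 cF ltac:(lra)) as [d1 [d1p H1]].
    destruct (scaled_leftcont B G p (eps / 2) B0 cG ltac:(lra)) as [d2 [d2p H2]].
    exists (Rmin d1 d2); split; [apply Rmin_glb_lt; assumption|].
    intros q Hq. assert (Rmin d1 d2 <= d1) by apply Rmin_l. assert (Rmin d1 d2 <= d2) by apply Rmin_r.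
    specialize (H1 q ltac:(lra)). specialize (H2 q ltac:(lra)).
    replace (A * F q + B * G q - (A * F p + B * G p)) with (A * (F q - F p) + B * (G q - G p)) by ring.
    eapply Rle_lt_trans; [apply Rabs_triang|].
    rewrite !Rabs_mult, (Rabs_pos_eq A), (Rabs_pos_eq B) by assumption. lra.
Qed.

Definition Qlin (a : R) (F : Qb) (b : R) (G : Qb) : Qb :=
  exist _ (linf a (Qfun F) b (Qfun G)) (lin_ok a (Qfun F) b (Qfun G) (proj2_sig F) (proj2_sig G)).

Lemma Qconst_val (c : R) (p : I01) : Qfun (Qconst c) p = c.
Proof. reflexivity. Qed.

Lemma Ind_val (a : R) (p : I01) : Qfun (Ind a) p = if Rlt_dec a (proj1_sig p) then 1 else 0.
Proof. reflexivity. Qed.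

Lemma Qlin_val (a : R) (F : Qb) (b : R) (G : Qb) (p : I01) :
  Qfun (Qlin a F b G) p = Rmax 0 a * Qfun F p + Rmax 0 b * Qfun G p.
Proof. reflexivity. Qed.

Lemma Rmax0_pos (x : R) : 0 <= x -> Rmax 0 x = x.
Proof. apply Rmax_right. Qed.

Lemma Qb_bounded (F : Qb) : exists M, 1 <= M /\ forall p, - M <= Qfun F p <= M.
Proof.
  destruct (proj2_sig F) as [[M HM] _]. exists (Rmax 1 M). split; [apply Rmax_l|].
  intros p. assert (Rabs (Qfun F p) <= Rmax 1 M) by (eapply Rle_trans; [apply HM|apply Rmax_r]).
  revert H. unfold Rabs. destruct Rcase_abs; lra.
Qed.

Lemma ext_in (f : I01 -> R) (x : R) (h : 0 < x <= 1) : ext f x = f (exist _ x h).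
Proof.
  destruct h as [ha hb]. unfold ext.
  destruct (Rlt_le_dec 0 x) as [h0|h0]; [|exfalso; lra].
  destruct (Rle_lt_dec x 1) as [h1|h1]; [|exfalso; lra].
  do 2 f_equal. apply proof_irrelevance.
Qed.

Lemma ext_Q (f : I01 -> R) (p : I01) : ext f (proj1_sig p) = f p.
Proof. destruct p as [x h]. apply ext_in. Qed.

Lemma ext_out (f : I01 -> R) (x : R) : x <= 0 -> ext f x = 0.
Proof. intros H. unfold ext. destruct (Rlt_le_dec 0 x); [exfalso; lra|reflexivity]. Qed.

Lemma ext_mono (F : Qb) (a b : R) : 0 < a -> a <= b -> b <= 1 -> ext (Qfun F) a <= ext (Qfun F) b.
Proof.
  intros. rewrite (ext_in _ a ltac:(lra)), (ext_in _ b ltac:(lra)).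
  destruct (proj2_sig F) as [_ [mono _]]. apply mono. simpl. lra.
Qed.

Lemma ext_bounded (F : Qb) (M : R) :
  0 <= M -> (forall p, - M <= Qfun F p <= M) -> forall x, - M <= ext (Qfun F) x <= M.
Proof.
  intros HM H x. unfold ext.
  destruct Rlt_le_dec; [destruct Rle_lt_dec; [apply H|]|]; lra.
Qed.

(* Riemann-Stieltjes integrals over [0,1] are unique: compare the Riemann sums
   of a single uniform partition fine enough for both values. *)
Lemma RS_unique (f g : R -> R) (I J : R) :
  RS_integral f g 0 1 I -> RS_integral f g 0 1 J -> I = J.
Proof.
  intros HI HJ. destruct (Req_dec I J) as [|Hne]; [assumption|exfalso].
  assert (Hp : 0 < Rabs (I - J)) by (apply Rabs_pos_lt; lra).
  destruct (HI (Rabs (I - J) / 2) ltac:(lra)) as [d1 [d1p H1]].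
  destruct (HJ (Rabs (I - J) / 2) ltac:(lra)) as [d2 [d2p H2]].
  destruct (archimed_cor1 (Rmin d1 d2)) as [N [HN N0]]; [apply Rmin_glb_lt; lra|].
  assert (HNp : INR N > 0) by (apply lt_0_INR; lia).
  set (x := fun i : nat => INR i / INR N).
  assert (Hcells : forall d, Rmin d1 d2 <= d -> forall i, (i < N)%nat ->
            x i < x (S i) /\ x (S i) - x i < d /\ x i <= x i <= x (S i)).
  { intros d Hd i Hi. unfold x. rewrite S_INR.
    replace ((INR i + 1) / INR N - INR i / INR N) with (/ INR N) by (field; lra).
    assert (0 < / INR N) by (apply Rinv_0_lt_compat; lra).
    assert (INR i / INR N < (INR i + 1) / INR N) by (unfold Rdiv; apply Rmult_lt_compat_r; lra).
    repeat split; lra. }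
  assert (x0 : x O = 0) by (unfold x; simpl; unfold Rdiv; ring).
  assert (xN : x N = 1) by (unfold x; field; lra).
  specialize (H1 N x x x0 xN (Hcells d1 (Rmin_l _ _))).
  specialize (H2 N x x x0 xN (Hcells d2 (Rmin_r _ _))).
  set (S := rsum _ N) in *.
  assert (Rabs (I - J) <= Rabs (S - J) + Rabs (S - I)).
  { replace (I - J) with ((S - J) - (S - I)) by ring.
    eapply Rle_trans; [apply Rabs_triang|]. rewrite Rabs_Ropp; lra. }
  lra.
Qed.

Lemma dist_eq (F G : Qb) (I : R) :
  RS_integral (fun x => Rabs (ext (Qfun F) x - ext (Qfun G) x)) (fun x => x) 0 1 I ->
  Defs.dist F G = I.
Proof.
  intros H. unfold Defs.dist.
  exact (RS_unique _ _ _ _ (epsilon_spec _ _ (ex_intro _ I H)) H).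
Qed.

Lemma partition_mono (x : nat -> R) (n : nat) :
  (forall i, (i < n)%nat -> x i < x (S i)) ->
  forall i j, (i <= j)%nat -> (j <= n)%nat -> x i <= x j.
Proof.
  intros H i j Hij. induction Hij as [|j Hij IH]; intros; [lra|].
  assert (x j < x (S j)) by (apply H; lia). assert (x i <= x j) by (apply IH; lia). lra.
Qed.

Lemma RS_by_telescoping (h : R -> R) (L : R) :
  (forall eps, eps > 0 -> exists delta, delta > 0 /\ exists c e : R -> R,
     c 1 - c 0 = L /\ e 1 - e 0 < eps /\
     forall u v t, 0 <= u -> u < v -> v <= 1 -> v - u < delta -> u <= t <= v ->
       Rabs (h t * (v - u) - (c v - c u)) <= e v - e u) ->
  RS_integral h (fun x => x) 0 1 L.
Proof.
  intros H eps Heps. destruct (H eps Heps) as [d [dp [c [e [Hc [He Hb]]]]]].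
  exists d; split; [exact dp|]. intros n x t x0 xn Hp.
  assert (Hm : forall i, (i < n)%nat -> x i < x (S i)) by (intros i Hi; apply Hp, Hi).
  assert (A := rsum_tele_approx (fun i => h (t i) * (x (S i) - x i))
                 (fun i => c (x i)) (fun i => e (x i)) n).
  cbv beta in A. rewrite x0, xn, Hc in A.
  eapply Rle_lt_trans; [apply A|lra]. intros i Hi. destruct (Hp i Hi) as [h1 [h2 h3]].
  apply Hb; auto.
  - rewrite <- x0. apply (partition_mono x n Hm); lia.
  - rewrite <- xn. apply (partition_mono x n Hm); lia.
Qed.

Definition clamp (lo hi y : R) : R := Rmax lo (Rmin hi y).

Lemma clamp_range (lo hi y : R) : lo <= hi -> lo <= clamp lo hi y <= hi.
Proof. intros. unfold clamp, Rmax, Rmin. repeat destruct Rle_dec; lra. Qed.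

Lemma clamp_lip (lo hi y z : R) : lo <= hi -> y <= z -> 0 <= clamp lo hi z - clamp lo hi y <= z - y.
Proof. intros. unfold clamp, Rmax, Rmin. repeat destruct Rle_dec; lra. Qed.

Lemma clamp_id (lo hi y : R) : lo <= y <= hi -> clamp lo hi y = y.
Proof. intros. unfold clamp, Rmax, Rmin. repeat destruct Rle_dec; lra. Qed.

Lemma clamp_lo (lo hi y : R) : y <= lo <= hi -> clamp lo hi y = lo.
Proof. intros. unfold clamp, Rmax, Rmin. repeat destruct Rle_dec; lra. Qed.

Lemma clamp_hi (lo hi y : R) : lo <= hi <= y -> clamp lo hi y = hi.
Proof. intros. unfold clamp, Rmax, Rmin. repeat destruct Rle_dec; lra. Qed.

Lemma clamp_abs (lo hi y z : R) : lo <= hi -> Rabs (clamp lo hi z - clamp lo hi y) <= Rabs (z - y).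
Proof.
  intros. destruct (Rle_dec y z).
  - destruct (clamp_lip lo hi y z) as [A B]; auto. rewrite !Rabs_pos_eq; lra.
  - destruct (clamp_lip lo hi z y) as [A B]; auto; [lra|]. rewrite !Rabs_left1; lra.
Qed.

(* A function equal to K on (a,b] and to 0 on the rest of [0,1] has integral
   K (b - a): the primitive is K clamp a b, and the only cells where the
   Riemann-Stieltjes term differs from its increment are those straddling a or b. *)
Lemma RS_interval_indicator (h : R -> R) (K a b : R) :
  0 <= K -> 0 <= a <= b -> b <= 1 ->
  (forall t, 0 <= t <= 1 -> (a < t <= b -> h t = K) /\ (~ (a < t <= b) -> h t = 0)) ->
  RS_integral h (fun x => x) 0 1 (K * (b - a)).
Proof.
  intros HK Hab Hb Hh. apply RS_by_telescoping. intros eps Heps.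
  set (d := eps / (8 * (K + 1))).
  assert (dp : d > 0) by (unfold d; apply Rdiv_lt_0_compat; lra).
  assert (Ed : d * (8 * (K + 1)) = eps) by (unfold d; field; lra).
  exists d; split; [exact dp|].
  exists (fun y => K * clamp a b y),
         (fun y => K * (clamp (a - d) (a + d) y + clamp (b - d) (b + d) y)).
  split; [rewrite (clamp_hi a b 1), (clamp_lo a b 0) by lra; ring|].
  split.
  { assert (W1 := clamp_lip (a - d) (a + d) 0 1 ltac:(lra) ltac:(lra)).
    assert (W2 := clamp_lip (b - d) (b + d) 0 1 ltac:(lra) ltac:(lra)).
    assert (W3 := clamp_range (a - d) (a + d) 1 ltac:(lra)).
    assert (W4 := clamp_range (a - d) (a + d) 0 ltac:(lra)).
    assert (W5 := clamp_range (b - d) (b + d) 1 ltac:(lra)).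
    assert (W6 := clamp_range (b - d) (b + d) 0 ltac:(lra)).
    nra. }
  intros u v t Hu Huv Hv Hd Ht. cbv beta.
  destruct (Hh t ltac:(lra)) as [Hin Hout].
  assert (Lc := clamp_lip a b u v ltac:(lra) ltac:(lra)).
  assert (La := clamp_lip (a - d) (a + d) u v ltac:(lra) ltac:(lra)).
  assert (Lb := clamp_lip (b - d) (b + d) u v ltac:(lra) ltac:(lra)).
  (* The error is never more than K (v - u); it is 0 unless [u,v] straddles a or b,
     in which case the corresponding corrector increases by exactly v - u. *)
  assert (Rough : Rabs (h t * (v - u) - (K * clamp a b v - K * clamp a b u)) <= K * (v - u)).
  { apply Rabs_le. destruct (classic (a < t <= b)) as [C|C];
      [rewrite (Hin C)|rewrite (Hout C)]; split; nra. }
  assert (Zero : h t * (v - u) - (K * clamp a b v - K * clamp a b u) = 0 ->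
                 Rabs (h t * (v - u) - (K * clamp a b v - K * clamp a b u)) <=
                 K * (clamp (a - d) (a + d) v + clamp (b - d) (b + d) v) -
                 K * (clamp (a - d) (a + d) u + clamp (b - d) (b + d) u)).
  { intros E. rewrite E, Rabs_R0. nra. }
  destruct (Rle_dec u a) as [ua|ua]; [destruct (Rle_dec a v) as [av|av]|].
  - rewrite (clamp_id (a - d) (a + d) u), (clamp_id (a - d) (a + d) v) by lra. nra.
  - apply Zero. rewrite (Hout ltac:(lra)), (clamp_lo a b u), (clamp_lo a b v) by lra. ring.
  - destruct (Rle_dec v b) as [vb|vb]; [|destruct (Rle_dec u b) as [ub|ub]].
    + apply Zero. rewrite (Hin ltac:(lra)), (clamp_id a b u), (clamp_id a b v) by lra. ring.
    + rewrite (clamp_id (b - d) (b + d) u), (clamp_id (b - d) (b + d) v) by lra. nra.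
    + apply Zero. rewrite (Hout ltac:(lra)), (clamp_hi a b u), (clamp_hi a b v) by lra. ring.
Qed.

Lemma dist_Qconst (a b : R) : Defs.dist (Qconst a) (Qconst b) = Rabs (a - b).
Proof.
  apply dist_eq. replace (Rabs (a - b)) with (Rabs (a - b) * (1 - 0)) by ring.
  apply RS_interval_indicator; [apply Rabs_pos|lra|lra|].
  intros t Ht. split; intros C.
  - rewrite !(ext_in _ t C). reflexivity.
  - rewrite !ext_out by lra. rewrite Rminus_diag. apply Rabs_R0.
Qed.

Lemma dist_Ind (a b : R) : 0 <= a <= 1 -> 0 <= b <= 1 -> Defs.dist (Ind a) (Ind b) = Rabs (a - b).
Proof.
  intros Ha Hb. apply dist_eq.
  replace (Rabs (a - b)) with (1 * (Rmax a b - Rmin a b))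
    by (unfold Rmax, Rmin, Rabs; destruct Rle_dec, Rcase_abs; lra).
  apply RS_interval_indicator; [lra|unfold Rmin, Rmax; destruct Rle_dec; lra|
                                unfold Rmax; destruct Rle_dec; lra|].
  intros t Ht. destruct (Rle_lt_dec t 0) as [t0|t0].
  - rewrite !ext_out, Rminus_diag, Rabs_R0 by lra.
    split; intros; [unfold Rmin in *; destruct Rle_dec; lra|reflexivity].
  - rewrite !(ext_in _ t ltac:(lra)). unfold Qfun, Ind, indf. simpl.
    unfold Rmin, Rmax. destruct Rle_dec, (Rlt_dec a t), (Rlt_dec b t);
      rewrite ?Rminus_diag, ?Rminus_0_r, ?Rminus_0_l, ?Rabs_Ropp, ?Rabs_R0, ?Rabs_R1;
      split; intros; lra.
Qed.

Definition partition01 (x : nat -> R) (n : nat) : Prop :=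
  x O = 0 /\ x n = 1 /\ forall i, (i < n)%nat -> x i < x (S i).

Lemma partition_range (x : nat -> R) (n i : nat) : partition01 x n -> (i <= n)%nat -> 0 <= x i <= 1.
Proof.
  intros [x0 [xn Hx]] Hi.
  split; [rewrite <- x0|rewrite <- xn]; apply (partition_mono x n Hx); lia.
Qed.

Lemma partition_pos (x : nat -> R) (n i : nat) : partition01 x n -> (1 <= i <= n)%nat -> 0 < x i.
Proof.
  intros [x0 [xn Hx]] Hi. rewrite <- x0.
  assert (x O < x 1%nat) by (apply Hx; lia).
  assert (x 1%nat <= x i) by (apply (partition_mono x n Hx); lia). lra.
Qed.

Lemma partition_cell (x : nat -> R) (n : nat) (P : R) : partition01 x n -> 0 < P <= 1 ->
  exists j, (j < n)%nat /\ x j < P <= x (S j).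
Proof.
  intros [x0 [xn _]] HP.
  assert (G : forall k, P <= x k -> exists j, (j < k)%nat /\ x j < P <= x (S j)).
  { induction k as [|k IH]; intros Hk; [lra|].
    destruct (Rlt_le_dec (x k) P) as [h|h].
    - exists k. split; [lia|lra].
    - destruct (IH h) as [j [Hj1 Hj2]]. exists j; split; [lia|exact Hj2]. }
  apply G. lra.
Qed.

Fixpoint stepQ (l x : nat -> R) (k : nat) : Qb :=
  match k with
  | O => Qconst (l O)
  | S k' => Qlin 1 (stepQ l x k') (l (S k') - l k') (Ind (x (S k')))
  end.

Lemma stepQ_value (l x : nat -> R) (m j : nat) (p : I01) :
  (forall i, (i < S m)%nat -> x i < x (S i)) -> (forall i, (i < m)%nat -> l i <= l (S i)) ->
  (j <= m)%nat -> x j < proj1_sig p <= x (S j) -> Qfun (stepQ l x m) p = l j.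
Proof.
  intros Hx Hl Hj Hp.
  assert (G : forall k, (k <= m)%nat -> Qfun (stepQ l x k) p = l (Nat.min j k)).
  { induction k as [|k IH]; intros Hk; [rewrite Nat.min_0_r; reflexivity|].
    simpl stepQ. rewrite Qlin_val, (Rmax0_pos 1) by lra. rewrite Ind_val, IH by lia.
    rewrite (Rmax0_pos (l (S k) - l k)) by (assert (l k <= l (S k)) by (apply Hl; lia); lra).
    destruct (Compare_dec.le_lt_dec (S k) j) as [h|h].
    - rewrite !Nat.min_r by lia.
      assert (x (S k) <= x j) by (apply (partition_mono x (S m) Hx); lia).
      destruct Rlt_dec; [ring|lra].
    - rewrite !Nat.min_l by lia.
      assert (x (S j) <= x (S k)) by (apply (partition_mono x (S m) Hx); lia).
      destruct Rlt_dec; [lra|ring]. }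
  rewrite G, Nat.min_l by lia. reflexivity.
Qed.

Lemma summation_by_parts (l y : nat -> R) (k : nat) : y O = 0 ->
  l O + rsum (fun i => (l (S i) - l i) * (1 - y (S i))) k =
  rsum (fun i => l i * (y (S i) - y i)) (S k) + l k * (1 - y (S k)).
Proof.
  intros y0. induction k as [|k IH]; simpl; [rewrite y0; ring|].
  simpl in IH. rewrite <- Rplus_assoc, IH. ring.
Qed.

(* Lower values of a nondecreasing f on the cells of a partition: f at the left
   endpoint, except on the first cell, whose left endpoint 0 lies outside the
   domain of monotonicity, where the bound -M is used. *)
Definition cell_floor (f : R -> R) (M : R) (x : nat -> R) (i : nat) : R :=
  match i with O => - M | S _ => f (x i) end.

Section TaggedSums.

Variables (f : R -> R) (M : R) (x : nat -> R) (m : nat).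
Hypothesis Hx : partition01 x (S m).
Hypothesis f_bounded : forall y, - M <= f y <= M.
Hypothesis f_mono : forall a b, 0 < a -> a <= b -> b <= 1 -> f a <= f b.

Lemma cell_floor_mono (i : nat) : (i < S m)%nat -> cell_floor f M x i <= cell_floor f M x (S i).
Proof.
  intros Hi. destruct i as [|i]; simpl; [apply f_bounded|].
  apply f_mono; [apply (partition_pos x (S m)); auto; lia| |apply (partition_range x (S m)); auto].
  apply Rlt_le, (proj2 (proj2 Hx)); lia.
Qed.

(* A tagged sum lies between the sums of the lower values and of the next lower
   values, up to 2 M e coming from the first cell. *)
Lemma tagged_sum_bounds (t d : nat -> R) (e : R) :
  (forall i, (i < S m)%nat -> x i <= t i <= x (S i)) ->
  (forall i, (i < S m)%nat -> 0 <= d i <= e) ->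
  rsum (fun i => cell_floor f M x i * d i) (S m) <= rsum (fun i => f (t i) * d i) (S m) <=
  rsum (fun i => cell_floor f M x (S i) * d i) (S m) + 2 * M * e.
Proof.
  intros Ht Hd.
  assert (Htag : forall i, (i < m)%nat -> 0 < x (S i) <= t (S i) /\ t (S i) <= x (S (S i)) <= 1).
  { intros i Hi. assert (0 < x (S i)) by (apply (partition_pos x (S m)); auto; lia).
    assert (x (S (S i)) <= 1) by (apply (partition_range x (S m)); auto; lia).
    specialize (Ht (S i) ltac:(lia)). lra. }
  split.
  - apply rsum_le. intros i Hi. apply Rmult_le_compat_r; [apply Hd, Hi|].
    destruct i as [|i]; simpl; [apply f_bounded|].
    destruct (Htag i ltac:(lia)). apply f_mono; lra.
  - rewrite !rsum_first.
    assert (Rest : rsum (fun i => f (t (S i)) * d (S i)) m <=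
                   rsum (fun i => cell_floor f M x (S (S i)) * d (S i)) m).
    { apply rsum_le. intros i Hi. apply Rmult_le_compat_r; [apply Hd; lia|].
      destruct (Htag i Hi). apply f_mono; lra. }
    assert (First : f (t O) * d O <= cell_floor f M x 1 * d O + 2 * M * e).
    { simpl. assert (B0 := f_bounded (t O)). assert (B1 := f_bounded (x 1%nat)).
      destruct (Hd O ltac:(lia)). nra. }
    lra.
Qed.

Lemma cell_floor_gap (d : nat -> R) (e : R) :
  (forall i, (i < S m)%nat -> 0 <= d i <= e) ->
  rsum (fun i => cell_floor f M x (S i) * d i) (S m) <=
  rsum (fun i => cell_floor f M x i * d i) (S m) + 2 * M * e.
Proof.
  intros Hd.
  assert (Gap := rsum_increments_le (cell_floor f M x) d e (S m) cell_floor_mono Hd).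
  rewrite (rsum_ext _ (fun i => cell_floor f M x (S i) * d i - cell_floor f M x i * d i))
    in Gap by (intros; ring).
  rewrite rsum_minus in Gap. change (cell_floor f M x (S m)) with (f (x (S m))) in Gap.
  change (cell_floor f M x O) with (- M) in Gap.
  assert (B := f_bounded (x (S m))). assert (0 <= e) by (destruct (Hd O ltac:(lia)); lra).
  assert (e * (f (x (S m)) - - M) <= 2 * M * e) by nra. lra.
Qed.

End TaggedSums.

Lemma step_bracket (F : Qb) (M : R) (x : nat -> R) (m : nat) :
  partition01 x (S m) -> 0 <= M -> (forall p, - M <= Qfun F p <= M) ->
  forall p, Qfun (stepQ (cell_floor (ext (Qfun F)) M x) x m) p <= Qfun F p <=
            Qfun (stepQ (fun i => cell_floor (ext (Qfun F)) M x (S i)) x m) p.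
Proof.
  intros Hx HM HF p.
  assert (Hb := ext_bounded F M HM HF). assert (Hm := ext_mono F).
  assert (Hg := cell_floor_mono _ M x m Hx Hb Hm).
  assert (hP := proj2_sig p).
  destruct (partition_cell x (S m) (proj1_sig p) Hx hP) as [j [Hj HjP]].
  destruct Hx as [x0 [xn Hinc]].
  assert (Hlo : forall i, (i < m)%nat -> cell_floor (ext (Qfun F)) M x i <= cell_floor (ext (Qfun F)) M x (S i))
    by (intros; apply Hg; lia).
  assert (Hup : forall i, (i < m)%nat ->
                  cell_floor (ext (Qfun F)) M x (S i) <= cell_floor (ext (Qfun F)) M x (S (S i)))
    by (intros; apply Hg; lia).
  rewrite (stepQ_value _ x m j p Hinc Hlo), (stepQ_value _ x m j p Hinc Hup) by (lia || exact HjP).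
  rewrite <- (ext_Q (Qfun F) p). split.
  - destruct j as [|j]; simpl; [apply Hb|].
    apply Hm; [apply (partition_pos x (S m)); [repeat split; auto|lia]|lra|lra].
  - simpl. apply Hm; [lra|lra|rewrite <- xn; apply (partition_mono x (S m) Hinc); lia].
Qed.

(* A total preorder on Q_b: transitive, total, monotone, L1-continuous and
   satisfying dual independence (reflexivity follows from totality). *)
Section Preference.

Variable ge : Qb -> Qb -> Prop.

Hypothesis ge_trans : forall F G H : Qb, ge F G -> ge G H -> ge F H.
Hypothesis ge_total : forall F G : Qb, ge F G \/ ge G F.
Hypothesis ge_mono : forall F G : Qb, (forall p : I01, Qfun G p <= Qfun F p) -> ge F G.
Hypothesis ge_cont : forall F : Qb, L1closed (fun G => ge G F) /\ L1closed (fun G => ge F G).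
Hypothesis ge_indep : forall (F G H X Y : Qb) (alpha : R), 0 < alpha < 1 ->
  (forall p : I01, Qfun X p = alpha * Qfun F p + (1 - alpha) * Qfun H p) ->
  (forall p : I01, Qfun Y p = alpha * Qfun G p + (1 - alpha) * Qfun H p) ->
  strict ge F G -> strict ge X Y.

Lemma strict_ge_trans (A B D : Qb) : strict ge A B -> ge B D -> strict ge A D.
Proof. intros [h1 h2] h3. split; [eauto|]. intros h4. apply h2; eauto. Qed.

Lemma ge_strict_trans (A B D : Qb) : ge A B -> strict ge B D -> strict ge A D.
Proof. intros h1 [h2 h3]. split; [eauto|]. intros h4. apply h3; eauto. Qed.

Lemma not_ge_strict (A B : Qb) : ~ ge A B -> strict ge B A.
Proof. intros h. split; [|exact h]. destruct (ge_total A B); tauto. Qed.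

Lemma const_ge (a b : R) : a <= b -> ge (Qconst b) (Qconst a).
Proof. intros. apply ge_mono. intros p. simpl. unfold cst. lra. Qed.

(* Degenerate case: if no two constants are strictly ranked, nothing is,
   since every F lies between two constants. *)
Lemma no_strict_between_constants :
  ~ (exists a b, strict ge (Qconst a) (Qconst b)) -> forall F G, ~ strict ge F G.
Proof.
  intros N F G S. apply N.
  destruct (Qb_bounded F) as [M [_ HM]]. destruct (Qb_bounded G) as [M' [_ HM']].
  exists M, (- M'). apply (ge_strict_trans _ F).
  - apply ge_mono. intros p. apply HM.
  - apply (strict_ge_trans _ G _ S). apply ge_mono. intros p. apply HM'.
Qed.

Hypothesis nondegenerate : exists a b, strict ge (Qconst a) (Qconst b).

(* Larger constants are strictly preferred: mixing a strictly ranked pair a > b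
   with a constant h shrinks the gap a - b by the factor al, and h can be
   chosen to put the lower end at any c. *)
Lemma const_strict (c c' : R) : c < c' -> strict ge (Qconst c') (Qconst c).
Proof.
  destruct nondegenerate as [a [b S]]. intros Hc.
  assert (ab : b < a).
  { apply Rnot_le_lt. intros Hab. apply (proj2 S), const_ge, Hab. }
  set (al := Rmin (1/2) ((c' - c) / (a - b))).
  assert (al0 : 0 < al) by (apply Rmin_glb_lt; [lra|apply Rdiv_lt_0_compat; lra]).
  assert (al1 : al <= 1/2) by apply Rmin_l.
  assert (al2 : al * (a - b) <= c' - c).
  { assert (al <= (c' - c) / (a - b)) by apply Rmin_r.
    replace (c' - c) with ((c' - c) / (a - b) * (a - b)) by (field; lra).
    apply Rmult_le_compat_r; lra. }
  set (h := (c - al * b) / (1 - al)).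
  assert (Mix := ge_indep (Qconst a) (Qconst b) (Qconst h)
                   (Qconst (c + al * (a - b))) (Qconst c) al ltac:(lra)).
  apply (ge_strict_trans _ (Qconst (c + al * (a - b)))); [apply const_ge; lra|].
  apply Mix; [intros; simpl; unfold cst, h; field; lra|intros; simpl; unfold cst, h; field; lra|exact S].
Qed.

(* Every F has a certainty equivalent s, the supremum of the constants below F;
   the two closedness conditions exclude both F > s and s > F. *)
Lemma certainty_equivalent_exists (F : Qb) : exists s, ge (Qconst s) F /\ ge F (Qconst s).
Proof.
  destruct (Qb_bounded F) as [M [M1 HM]].
  set (E := fun c => ge F (Qconst c)).
  assert (Eb : bound E).
  { exists M. intros c Ec. apply Rnot_lt_le. intros HMc.
    apply (proj2 (strict_ge_trans _ _ F (const_strict M c HMc) ltac:(apply ge_mono; apply HM))), Ec. }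
  assert (Ene : exists c, E c) by (exists (- M); apply ge_mono; apply HM).
  destruct (completeness E Eb Ene) as [s [Hub Hlub]].
  exists s. split; apply NNPP; intros N.
  - destruct (proj1 (ge_cont F) (Qconst s) N) as [eps [ep Heps]].
    apply (Heps (Qconst (s + eps / 2))).
    + rewrite dist_Qconst. replace (s - (s + eps / 2)) with (- (eps / 2)) by ring.
      rewrite Rabs_Ropp, Rabs_pos_eq; lra.
    + destruct (ge_total F (Qconst (s + eps / 2))) as [G'|G']; [|exact G'].
      assert (s + eps / 2 <= s) by (apply Hub; exact G'). lra.
  - destruct (proj2 (ge_cont F) (Qconst s) N) as [eps [ep Heps]].
    assert (Hc : exists c, E c /\ s - eps < c).
    { apply NNPP. intros Hn. assert (s <= s - eps); [|lra]. apply Hlub. intros c Ec.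
      apply Rnot_lt_le. intros Hlt. apply Hn. exists c. split; assumption. }
    destruct Hc as [c [Ec Hc]]. assert (c <= s) by (apply Hub, Ec).
    apply (Heps (Qconst c)); [|exact Ec]. rewrite dist_Qconst, Rabs_pos_eq; lra.
Qed.

Definition V (F : Qb) : R :=
  proj1_sig (constructive_indefinite_description _ (certainty_equivalent_exists F)).

Lemma V_spec (F : Qb) : ge (Qconst (V F)) F /\ ge F (Qconst (V F)).
Proof. unfold V. destruct constructive_indefinite_description as [s Hs]. exact Hs. Qed.

Lemma V_strict (F G : Qb) : strict ge F G <-> V F > V G.
Proof.
  destruct (V_spec F) as [F1 F2]. destruct (V_spec G) as [G1 G2]. split.
  - intros [S1 S2]. apply Rnot_le_lt. intros Hle. apply S2.
    apply (ge_trans _ _ _ G2), (ge_trans _ _ _ (const_ge _ _ Hle)), F1.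
  - intros Hlt. destruct (const_strict _ _ Hlt) as [C1 C2]. split.
    + apply (ge_trans _ _ _ F2), (ge_trans _ _ _ C1), G1.
    + intros Hc. apply C2, (ge_trans _ _ _ G1), (ge_trans _ _ _ Hc), F2.
Qed.

Lemma V_const (c : R) : V (Qconst c) = c.
Proof.
  destruct (V_spec (Qconst c)) as [F1 F2].
  destruct (Rtotal_order (V (Qconst c)) c) as [h|[h|h]]; [exfalso| |exfalso].
  - exact (proj2 (const_strict _ _ h) F1).
  - exact h.
  - exact (proj2 (const_strict _ _ h) F2).
Qed.

Lemma V_mono (F G : Qb) : (forall p, Qfun G p <= Qfun F p) -> V G <= V F.
Proof.
  intros H. apply Rnot_lt_le. intros Hlt.
  apply (proj2 (proj2 (V_strict G F) Hlt)), ge_mono, H.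
Qed.

Lemma V_ext (F G : Qb) : (forall p, Qfun G p = Qfun F p) -> V G = V F.
Proof. intros H. apply Rle_antisym; apply V_mono; intros p; rewrite H; lra. Qed.

Lemma V_cont (F : Qb) (eps : R) : eps > 0 -> exists delta, delta > 0 /\
  forall G, Defs.dist F G < delta -> Rabs (V G - V F) < eps.
Proof.
  intros ep.
  assert (N1 : ~ ge F (Qconst (V F + eps))).
  { intros H. apply (proj2 (V_strict (Qconst (V F + eps)) F)); [rewrite V_const; lra|exact H]. }
  assert (N2 : ~ ge (Qconst (V F - eps)) F).
  { intros H. apply (proj2 (V_strict F (Qconst (V F - eps)))); [rewrite V_const; lra|exact H]. }
  destruct (proj1 (ge_cont (Qconst (V F + eps))) F N1) as [d1 [d1p H1]].
  destruct (proj2 (ge_cont (Qconst (V F - eps))) F N2) as [d2 [d2p H2]].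
  exists (Rmin d1 d2). split; [apply Rmin_glb_lt; assumption|].
  intros G HG. assert (Rmin d1 d2 <= d1) by apply Rmin_l. assert (Rmin d1 d2 <= d2) by apply Rmin_r.
  assert (G1 := H1 G ltac:(lra)). assert (G2 := H2 G ltac:(lra)).
  apply not_ge_strict, V_strict in G1. apply not_ge_strict, V_strict in G2.
  rewrite V_const in G1, G2. apply Rabs_def1; lra.
Qed.

Lemma mix_strict_left (A B H : Qb) (al : R) : 0 < al < 1 -> strict ge A B ->
  strict ge (Qlin al A (1 - al) H) (Qlin al B (1 - al) H).
Proof.
  intros Hal S. apply (ge_indep A B H _ _ al Hal); [| |exact S];
    intros p; rewrite Qlin_val, !Rmax0_pos by lra; reflexivity.
Qed.

Lemma mix_strict_right (A B H : Qb) (al : R) : 0 < al < 1 -> strict ge A B ->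
  strict ge (Qlin al H (1 - al) A) (Qlin al H (1 - al) B).
Proof.
  intros Hal S. apply (ge_indep A B H _ _ (1 - al) ltac:(lra)); [| |exact S];
    intros p; rewrite Qlin_val, !Rmax0_pos by lra; ring.
Qed.

Lemma V_mix_const (al x y : R) : 0 < al < 1 ->
  V (Qlin al (Qconst x) (1 - al) (Qconst y)) = al * x + (1 - al) * y.
Proof.
  intros Hal. rewrite <- (V_const (al * x + (1 - al) * y)). apply V_ext.
  intros p. rewrite Qlin_val, !Rmax0_pos by lra. reflexivity.
Qed.

(* Dual independence makes V affine along mixtures: replacing F and G by
   constants within e on either side gives the value up to e. *)
Lemma V_mix (al : R) (F G : Qb) : 0 < al < 1 ->
  V (Qlin al F (1 - al) G) = al * V F + (1 - al) * V G.
Proof.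
  intros Hal.
  assert (Up : forall e, e > 0 -> V (Qlin al F (1 - al) G) < al * V F + (1 - al) * V G + e).
  { intros e ep.
    assert (S1 : strict ge (Qconst (V F + e)) F) by (apply V_strict; rewrite V_const; lra).
    assert (S2 : strict ge (Qconst (V G + e)) G) by (apply V_strict; rewrite V_const; lra).
    assert (T := strict_ge_trans _ _ _ (mix_strict_right _ _ (Qconst (V F + e)) al Hal S2)
                   (proj1 (mix_strict_left _ _ G al Hal S1))).
    apply V_strict in T. rewrite V_mix_const in T by exact Hal. lra. }
  assert (Lo : forall e, e > 0 -> V (Qlin al F (1 - al) G) > al * V F + (1 - al) * V G - e).
  { intros e ep.
    assert (S1 : strict ge F (Qconst (V F - e))) by (apply V_strict; rewrite V_const; lra).
    assert (S2 : strict ge G (Qconst (V G - e))) by (apply V_strict; rewrite V_const; lra).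
    assert (T := strict_ge_trans _ _ _ (mix_strict_left _ _ G al Hal S1)
                   (proj1 (mix_strict_right _ _ (Qconst (V F - e)) al Hal S2))).
    apply V_strict in T. rewrite V_mix_const in T by exact Hal. lra. }
  set (v := V (Qlin al F (1 - al) G)) in *.
  destruct (Rtotal_order v (al * V F + (1 - al) * V G)) as [h|[h|h]]; [|exact h|].
  - specialize (Lo (al * V F + (1 - al) * V G - v) ltac:(lra)). lra.
  - specialize (Up (v - (al * V F + (1 - al) * V G)) ltac:(lra)). lra.
Qed.

(* V is positively homogeneous: scalings by t < 1 are mixtures with 0, and
   scalings by t > 1 are undone by a mixture with 0. *)
Lemma V_scale (t : R) (F : Qb) : 0 <= t -> V (Qlin t F 0 F) = t * V F.
Proof.
  intros Ht.
  assert (Hv : forall p, Qfun (Qlin t F 0 F) p = t * Qfun F p)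
    by (intros p; rewrite Qlin_val, !Rmax0_pos by lra; ring).
  destruct (Rtotal_order t 1) as [h1|[h1|h1]]; [destruct (Req_dec t 0) as [h0|h0]| |].
  - replace (t * V F) with 0 by (rewrite h0; ring). rewrite <- (V_const 0) at 2. apply V_ext.
    intros p. rewrite Hv, h0, Qconst_val. ring.
  - assert (E : V (Qlin t F 0 F) = V (Qlin t F (1 - t) (Qconst 0))).
    { apply V_ext. intros p. rewrite Hv, Qlin_val, Qconst_val, !Rmax0_pos by lra. ring. }
    rewrite E, V_mix, V_const by lra. ring.
  - replace (t * V F) with (V F) by (rewrite h1; ring). apply V_ext. intros p. rewrite Hv, h1. ring.
  - assert (Hinv : 0 < / t < 1).
    { split; [apply Rinv_0_lt_compat; lra|]. rewrite <- Rinv_1. apply Rinv_lt_contravar; lra. }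
    assert (E : V F = V (Qlin (/ t) (Qlin t F 0 F) (1 - / t) (Qconst 0))).
    { apply V_ext. intros p. rewrite Qlin_val, Hv, !Rmax0_pos by lra. simpl. unfold cst. field. lra. }
    rewrite V_mix, V_const in E by exact Hinv. rewrite E. field. lra.
Qed.

Lemma V_lin (a : R) (F : Qb) (b : R) (G : Qb) :
  V (Qlin a F b G) = Rmax 0 a * V F + Rmax 0 b * V G.
Proof.
  set (A := Rmax 0 a). set (B := Rmax 0 b).
  assert (A0 : 0 <= A) by apply Rmax_l. assert (B0 : 0 <= B) by apply Rmax_l.
  destruct (Req_dec A 0) as [hA|hA].
  { assert (E : V (Qlin a F b G) = V (Qlin B G 0 G)).
    { apply V_ext. intros p. rewrite !Qlin_val. fold A B. rewrite hA, (Rmax0_pos B), Rmax0_pos by lra. ring. }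
    rewrite E, V_scale, hA by exact B0. ring. }
  destruct (Req_dec B 0) as [hB|hB].
  { assert (E : V (Qlin a F b G) = V (Qlin A F 0 F)).
    { apply V_ext. intros p. rewrite !Qlin_val. fold A B. rewrite hB, (Rmax0_pos A), Rmax0_pos by lra. ring. }
    rewrite E, V_scale, hB by exact A0. ring. }
  assert (Hw : 0 < A / (A + B) < 1).
  { split; [apply Rdiv_lt_0_compat; lra|].
    apply Rmult_lt_reg_r with (A + B); [lra|]. field_simplify; lra. }
  rewrite (V_ext (Qlin (A / (A + B)) (Qlin (A + B) F 0 F) (1 - A / (A + B)) (Qlin (A + B) G 0 G))).
  - rewrite V_mix, !V_scale by lra. field. lra.
  - intros p. rewrite !Qlin_val. fold A B. rewrite !Rmax0_pos by lra. field. lra.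
Qed.

Definition w (q : R) : R := 1 - V (Ind (clamp 0 1 q)).

Lemma V_Ind (q : R) : 0 <= q <= 1 -> V (Ind q) = 1 - w q.
Proof. intros h. unfold w. rewrite clamp_id by exact h. ring. Qed.

Lemma w_0 : w 0 = 0.
Proof.
  unfold w. rewrite clamp_id by lra. rewrite (V_ext (Qconst 1)), V_const; [ring|].
  intros [x hx]. rewrite Ind_val, Qconst_val. simpl. destruct Rlt_dec; lra.
Qed.

Lemma w_1 : w 1 = 1.
Proof.
  unfold w. rewrite clamp_id by lra. rewrite (V_ext (Qconst 0)), V_const; [ring|].
  intros [x hx]. rewrite Ind_val, Qconst_val. simpl. destruct Rlt_dec; lra.
Qed.

Lemma w_mono (x y : R) : x <= y -> w x <= w y.
Proof.
  intros H. unfold w. assert (W := clamp_lip 0 1 x y ltac:(lra) H).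
  assert (V (Ind (clamp 0 1 y)) <= V (Ind (clamp 0 1 x))); [|lra].
  apply V_mono. intros p. rewrite !Ind_val. do 2 destruct Rlt_dec; lra.
Qed.

Lemma w_range (x : R) : 0 <= w x <= 1.
Proof.
  unfold w.
  assert (V (Ind (clamp 0 1 x)) <= V (Qconst 1))
    by (apply V_mono; intros p; rewrite Ind_val, Qconst_val; destruct Rlt_dec; lra).
  assert (V (Qconst 0) <= V (Ind (clamp 0 1 x)))
    by (apply V_mono; intros p; rewrite Ind_val, Qconst_val; destruct Rlt_dec; lra).
  rewrite !V_const in *. lra.
Qed.

(* w is continuous, since q |-> 1_(q,1] is 1-Lipschitz for the L1 distance. *)
Lemma w_cont (x eps : R) : eps > 0 -> exists delta, delta > 0 /\
  forall y, Rabs (y - x) < delta -> Rabs (w y - w x) < eps.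
Proof.
  intros ep. destruct (V_cont (Ind (clamp 0 1 x)) eps ep) as [d [dp Hd]].
  exists d. split; [exact dp|]. intros y Hy.
  assert (R1 := clamp_range 0 1 x ltac:(lra)). assert (R2 := clamp_range 0 1 y ltac:(lra)).
  assert (D : Defs.dist (Ind (clamp 0 1 x)) (Ind (clamp 0 1 y)) < d).
  { rewrite dist_Ind by assumption. rewrite Rabs_minus_sym.
    eapply Rle_lt_trans; [apply clamp_abs; lra|exact Hy]. }
  specialize (Hd _ D). unfold w. rewrite <- Rabs_Ropp. 
  replace (- (1 - V (Ind (clamp 0 1 y)) - (1 - V (Ind (clamp 0 1 x)))))
    with (V (Ind (clamp 0 1 y)) - V (Ind (clamp 0 1 x))) by ring.
  exact Hd.
Qed.

Lemma w_uniform (eps : posreal) : exists delta : posreal, forall x y, 0 <= x <= 1 -> 0 <= y <= 1 ->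
  Rabs (x - y) < delta -> Rabs (w x - w y) < eps.
Proof.
  apply (Heine w (fun c => 0 <= c <= 1) (compact_P3 0 1)). intros x _ e ep.
  destruct (w_cont x e ep) as [d [dp Hd]]. exists d. split; [exact dp|].
  intros y [_ Hy]. exact (Hd y Hy).
Qed.

Lemma V_stepQ (l x : nat -> R) (m : nat) :
  V (stepQ l x m) = l O + rsum (fun i => Rmax 0 (l (S i) - l i) * V (Ind (x (S i)))) m.
Proof.
  induction m as [|m IH]; cbn [stepQ rsum]; [rewrite V_const; ring|].
  rewrite V_lin, IH, (Rmax0_pos 1) by lra. ring.
Qed.

Lemma V_step_sum (l x : nat -> R) (m : nat) :
  partition01 x (S m) -> (forall i, (i < m)%nat -> l i <= l (S i)) ->
  V (stepQ l x m) = rsum (fun i => l i * (w (x (S i)) - w (x i))) (S m).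
Proof.
  intros Hx Hl. rewrite V_stepQ.
  rewrite (rsum_ext _ (fun i => (l (S i) - l i) * (1 - w (x (S i))))).
  - rewrite (summation_by_parts l (fun i => w (x i))).
    + destruct Hx as [_ [xn _]]. rewrite xn, w_1. ring.
    + destruct Hx as [x0 _]. rewrite x0. apply w_0.
  - intros i Hi. specialize (Hl i Hi).
    rewrite Rmax0_pos, V_Ind by (lra || (apply (partition_range x (S m)); [exact Hx|lia])). ring.
Qed.

Lemma V_between_floor_sums (F : Qb) (M : R) (x : nat -> R) (m : nat) :
  partition01 x (S m) -> 0 <= M -> (forall p, - M <= Qfun F p <= M) ->
  let g := cell_floor (ext (Qfun F)) M x in
  rsum (fun i => g i * (w (x (S i)) - w (x i))) (S m) <= V F <=
  rsum (fun i => g (S i) * (w (x (S i)) - w (x i))) (S m).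
Proof.
  intros Hx HM HF g.
  assert (Hg := cell_floor_mono _ M x m Hx (ext_bounded F M HM HF) (ext_mono F)).
  rewrite <- !V_step_sum by (exact Hx || (intros; apply Hg; lia)).
  split; apply V_mono; intros p; apply (step_bracket F M x m Hx HM HF p).
Qed.

(* V F is the Riemann-Stieltjes integral of F against w: on a partition fine
   enough that w increases by at most e on each cell, the Riemann-Stieltjes
   sum and V F both lie in an interval of length 4 M e. *)
Lemma V_is_integral (F : Qb) : RS_integral (ext (Qfun F)) w 0 1 (V F).
Proof.
  intros eps Heps.
  destruct (Qb_bounded F) as [M [M1 HM]].
  assert (fb := ext_bounded F M ltac:(lra) HM). assert (fm := ext_mono F).
  set (e := eps / (4 * M + 1)).
  assert (ep : 0 < e) by (apply Rdiv_lt_0_compat; lra).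
  assert (Ee : e * (4 * M + 1) = eps) by (unfold e; field; lra).
  destruct (w_uniform (mkposreal e ep)) as [delta Hdelta].
  exists delta; split; [apply cond_pos|].
  intros n x t x0 xn Hcells.
  destruct n as [|m]; [rewrite x0 in xn; lra|].
  assert (Hx : partition01 x (S m)) by (repeat split; auto; intros; apply Hcells; assumption).
  assert (Hd : forall i, (i < S m)%nat -> 0 <= w (x (S i)) - w (x i) <= e).
  { intros i Hi. destruct (Hcells i Hi) as [h1 [h2 h3]].
    assert (w (x i) <= w (x (S i))) by (apply w_mono; lra).
    assert (A := Hdelta (x (S i)) (x i) (partition_range x (S m) (S i) Hx ltac:(lia))
                   (partition_range x (S m) i Hx ltac:(lia))).
    rewrite !Rabs_pos_eq in A by lra. specialize (A h2). simpl in A. lra. }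
  assert (Ht : forall i, (i < S m)%nat -> x i <= t i <= x (S i)) by (intros; apply Hcells; assumption).
  destruct (tagged_sum_bounds _ M x m Hx fb fm t _ e Ht Hd) as [SumLo SumUp].
  assert (Gap := cell_floor_gap _ M x m Hx fb fm _ e Hd).
  destruct (V_between_floor_sums F M x m Hx ltac:(lra) HM) as [VLo VUp].
  apply Rabs_def1; nra.
Qed.

Lemma nondegenerate_representation :
  exists w : R -> R,
    bounded_on01 w /\ nondecr_on01 w /\ continuous_on01 w /\
    exists U : Qb -> R,
      (forall F : Qb, RS_integral (ext (Qfun F)) w 0 1 (U F)) /\
      (forall F G : Qb, strict ge F G <-> U F > U G).
Proof.
  exists w. split; [|split; [|split]].
  - exists 1. intros x _. destruct (w_range x). rewrite Rabs_pos_eq; lra.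
  - intros x y _ H _. apply w_mono, H.
  - intros x _ eps ep. destruct (w_cont x eps ep) as [d [dp Hd]]. exists d. split; auto.
  - exists V. split; [exact V_is_integral|exact V_strict].
Qed.

End Preference.

Lemma RS_zero_integrator (f : R -> R) : RS_integral f (fun _ => 0) 0 1 0.
Proof.
  intros eps ep. exists 1. split; [lra|]. intros n x t _ _ _.
  rewrite (rsum_ext _ (fun i => 0 * 0)) by (intros; ring).
  rewrite rsum_scal, Rmult_0_l, Rminus_diag, Rabs_R0. exact ep.
Qed.

Theorem mainTheorem11 (ge : Qb -> Qb -> Prop)
  (Hrefl : forall F : Qb, ge F F)
  (Htrans : forall F G H : Qb, ge F G -> ge G H -> ge F H)
  (Hcompl : forall F G : Qb, ge F G \/ ge G F)
  (Hmono : forall F G : Qb, (forall p : I01, Qfun G p <= Qfun F p) -> ge F G)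
  (Hcont : forall F : Qb, L1closed (fun G => ge G F) /\ L1closed (fun G => ge F G))
  (Hindep : forall (F G H X Y : Qb) (alpha : R), 0 < alpha < 1 ->
     (forall p : I01, Qfun X p = alpha * Qfun F p + (1 - alpha) * Qfun H p) ->
     (forall p : I01, Qfun Y p = alpha * Qfun G p + (1 - alpha) * Qfun H p) ->
     strict ge F G -> strict ge X Y) :
  exists w : R -> R,
    bounded_on01 w /\ nondecr_on01 w /\ continuous_on01 w /\
    exists U : Qb -> R,
      (forall F : Qb, RS_integral (ext (Qfun F)) w 0 1 (U F)) /\
      (forall F G : Qb, strict ge F G <-> U F > U G).
Proof.
  destruct (classic (exists a b, strict ge (Qconst a) (Qconst b))) as [nd|nd].
  - exact (nondegenerate_representation ge Htrans Hcompl Hmono Hcont Hindep nd).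
  - exists (fun _ => 0). split; [|split; [|split]].
    + exists 0. intros. rewrite Rabs_R0. lra.
    + intros x y _ _ _. lra.
    + intros x _ eps ep. exists 1. split; [lra|]. intros. rewrite Rminus_diag, Rabs_R0. exact ep.
    + exists (fun _ => 0). split; [intros F; apply RS_zero_integrator|].
      intros F G. split; [|lra].
      intros S. exfalso. exact (no_strict_between_constants ge Htrans Hmono nd F G S).
Qed.
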